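(* There exists a finite set of points $X \subset \mathbb{R}^2$ together with a point $x \in X$ and a noncrossing tour $T$ through $X \setminus \{x\}$ (i.e., through all but one of the points) such that every noncrossing tour through all points of $X$ has length strictly less than $\ell(T)$.
   Context: For a finite set of points in $\mathbb{R}^2$, a tour is a Hamiltonian cycle on them; the length of an edge $\{a,b\}$ is the Euclidean distance $d(a,b)$ and $\ell(T)$ is the sum of the edge lengths of $T$. For an edge $e=\{a,b\}$, $L(e)$ denotes the closed line segment from $a$ to $b$. A tour is noncrossing if no two of its edges have intersecting line segments (other than at a shared endpoint). *)

From Stdlib Require Import Reals Lra Lia List Permutation.
Import ListNotations.
Open Scope R_scope.

Definition point := (R * R)%type.

Definition point_eq_dec : forall p q : point, {p = q} + {p <> q}.
Proof.
  intros [a b] [c d].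
  destruct (Req_EM_T a c) as [H1|H1]; destruct (Req_EM_T b d) as [H2|H2];
    subst; [left; reflexivity | right | right | right];
    intros H; inversion H; contradiction.
Defined.

Definition dist (a b : point) : R :=
  sqrt ((fst a - fst b) ^ 2 + (snd a - snd b) ^ 2).

Definition on_segment (a b p : point) : Prop :=
  exists s : R, 0 <= s <= 1 /\
    p = ((1 - s) * fst a + s * fst b, (1 - s) * snd a + s * snd b).

(* A tour is represented by a cyclic ordering t = [t_0; ...; t_{n-1}] of the
   points; its edges are {t_i, t_{(i+1) mod n}} for i < n. *)
Definition tour_edge (t : list point) (i : nat) : point * point :=
  (nth i t (0, 0), nth ((i + 1) mod length t) t (0, 0)).

Definition is_tour (S t : list point) : Prop :=
  NoDup t /\ Permutation t S /\ (3 <= length t)%nat.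

Definition tour_length (t : list point) : R :=
  fold_right Rplus 0
    (map (fun i => dist (fst (tour_edge t i)) (snd (tour_edge t i)))
         (seq 0 (length t))).

Definition noncrossing (t : list point) : Prop :=
  forall i j : nat, (i < length t)%nat -> (j < length t)%nat -> i <> j ->
    forall p : point,
      on_segment (fst (tour_edge t i)) (snd (tour_edge t i)) p ->
      on_segment (fst (tour_edge t j)) (snd (tour_edge t j)) p ->
      (p = fst (tour_edge t i) \/ p = snd (tour_edge t i)) /\
      (p = fst (tour_edge t j) \/ p = snd (tour_edge t j)).

(* Nine lattice points suffice. Rotating a tour changes neither its edges nor its length,
   so a tour of all nine points may be assumed to start at [extra_point], which
   leaves the 8! orderings of [base_points] to inspect. Exact integer arithmetic
   settles each of them: either two of its edges cross properly (each edge has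
   the endpoints of the other strictly on opposite sides of its line, a sign
   condition on integer orientation determinants), or the sum of floor(|e|) + 1
   over its edges e is already below the sum of floor(|e|) over the edges of
   [base_tour]. *)

From Pilot Require Import Defs.
From Stdlib Require Import Reals Lra Lia List Permutation ZArith Psatz.
Import ListNotations.
Open Scope R_scope.
Open Scope bool_scope.

Definition orient (a b c : point) : R :=
  (fst b - fst a) * (snd c - snd a) - (snd b - snd a) * (fst c - fst a).

Definition lerp (a b : point) (s : R) : point :=
  ((1 - s) * fst a + s * fst b, (1 - s) * snd a + s * snd b).

Lemma orient_lerp a b c d s :
  orient c d (lerp a b s) = (1 - s) * orient c d a + s * orient c d b.
Proof. unfold orient, lerp; simpl; ring. Qed.

Lemma orient_swap a b c : orient b a c = - orient a b c.
Proof. unfold orient; ring. Qed.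

Lemma orient_on_segment a b p : on_segment a b p -> orient a b p = 0.
Proof.
  intros [s [_ ->]]. change (orient a b (lerp a b s) = 0).
  rewrite orient_lerp. unfold orient; ring.
Qed.

Lemma on_segment_sym a b p : on_segment a b p -> on_segment b a p.
Proof.
  intros [s [Hs ->]]. exists (1 - s). split; [lra|]. f_equal; ring.
Qed.

Lemma on_segment_same_side a b c d p :
  0 < orient a b c * orient a b d -> on_segment a b p -> ~ on_segment c d p.
Proof.
  intros Hcd Hp [t [Ht ->]]. apply orient_on_segment in Hp.
  change (orient a b (lerp c d t) = 0) in Hp. rewrite orient_lerp in Hp.
  set (u := orient a b c) in *; set (v := orient a b d) in *.
  assert (Hu : u * ((1 - t) * u + t * v) = 0) by (rewrite Hp; ring).
  destruct (Req_dec t 0) as [->|Ht0]; nra.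
Qed.

Lemma on_segment_adjacent a b d p :
  orient a b d <> 0 -> on_segment a b p -> on_segment b d p -> p = b.
Proof.
  intros Hd Hp [t [Ht ->]]. apply orient_on_segment in Hp.
  change (orient a b (lerp b d t) = 0) in Hp.
  rewrite orient_lerp in Hp. replace (orient a b b) with 0 in Hp by (unfold orient; ring).
  assert (Ht0 : t * orient a b d = 0) by lra.
  apply Rmult_integral in Ht0 as [->|]; [|contradiction].
  destruct b; f_equal; simpl; ring.
Qed.

Lemma ratio_between x y : x * y < 0 -> 0 <= x / (x - y) <= 1.
Proof.
  intros Hxy. assert (E : x = x / (x - y) * (x - y)) by (field; nra).
  destruct (Rlt_or_le 0 x); split; nra.
Qed.

Lemma proper_crossing a b c d :
  orient c d a * orient c d b < 0 -> orient a b c * orient a b d < 0 ->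
  exists p, on_segment a b p /\ on_segment c d p /\ p <> a /\ p <> b.
Proof.
  intros Hab Hcd.
  (* The crossing point divides each segment in the ratio of the orientations
     of its endpoints with respect to the other segment. *)
  set (s := orient c d a / (orient c d a - orient c d b)).
  set (t := orient a b c / (orient a b c - orient a b d)).
  assert (Nab : orient c d a - orient c d b <> 0) by nra.
  assert (Ncd : orient a b c - orient a b d <> 0) by nra.
  assert (Hmeet : lerp a b s = lerp c d t).
  { unfold s, t, lerp. unfold orient in *.
    destruct a, b, c, d; simpl in *. f_equal; field; auto. }
  assert (Hon : orient c d (lerp a b s) = 0).
  { rewrite Hmeet, orient_lerp. unfold orient; ring. }
  exists (lerp a b s). split; [|split; [|split]].
  - exists s. split; [apply ratio_between; exact Hab | reflexivity].
  - rewrite Hmeet. exists t. split; [apply ratio_between; exact Hcd | reflexivity].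
  - intros E. rewrite E in Hon. rewrite Hon in Hab. lra.
  - intros E. rewrite E in Hon. rewrite Hon in Hab. lra.
Qed.

Definition zpoint := (Z * Z)%type.

Definition of_zpoint (a : zpoint) : point := (IZR (fst a), IZR (snd a)).

Definition orientZ (a b c : zpoint) : Z :=
  ((fst b - fst a) * (snd c - snd a) - (snd b - snd a) * (fst c - fst a))%Z.

Lemma orient_of_zpoint a b c :
  orient (of_zpoint a) (of_zpoint b) (of_zpoint c) = IZR (orientZ a b c).
Proof.
  unfold orient, orientZ, of_zpoint; simpl.
  rewrite minus_IZR, !mult_IZR, !minus_IZR. reflexivity.
Qed.

Lemma orient_prod_of_zpoint a b c d :
  orient (of_zpoint a) (of_zpoint b) (of_zpoint c) *
  orient (of_zpoint a) (of_zpoint b) (of_zpoint d) = IZR (orientZ a b c * orientZ a b d).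
Proof. rewrite !orient_of_zpoint, mult_IZR. reflexivity. Qed.

Lemma of_zpoint_inj : FinFun.Injective of_zpoint.
Proof.
  intros [a b] [c d] E. unfold of_zpoint in E; simpl in E.
  injection E as E1 E2. apply eq_IZR in E1, E2. subst. reflexivity.
Qed.

Definition zpoint_eqb (p q : zpoint) : bool := (fst p =? fst q)%Z && (snd p =? snd q)%Z.

Lemma zpoint_eqb_eq p q : zpoint_eqb p q = true -> p = q.
Proof.
  destruct p, q. unfold zpoint_eqb; simpl. intros [E1 E2]%andb_prop.
  apply Z.eqb_eq in E1, E2. subst. reflexivity.
Qed.

Definition tour_edgeZ (tz : list zpoint) (i : nat) : zpoint * zpoint :=
  (nth i tz (0, 0)%Z, nth ((i + 1) mod length tz) tz (0, 0)%Z).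

Lemma tour_edge_of_zpoint tz i :
  tour_edge (map of_zpoint tz) i =
  (of_zpoint (fst (tour_edgeZ tz i)), of_zpoint (snd (tour_edgeZ tz i))).
Proof.
  unfold tour_edge, tour_edgeZ. rewrite length_map.
  change (0, 0) with (of_zpoint (0, 0)%Z). rewrite !map_nth. reflexivity.
Qed.

Definition proper_crossingb (e f : zpoint * zpoint) : bool :=
  let '(a, b) := e in let '(c, d) := f in
  (orientZ c d a * orientZ c d b <? 0)%Z && (orientZ a b c * orientZ a b d <? 0)%Z.

(* Sufficient for two segments to meet at most in a shared endpoint: one lies
   strictly on one side of the other's line, or they share an endpoint and are
   not collinear. *)
Definition noncrossing_pairb (e f : zpoint * zpoint) : bool :=
  let '(a, b) := e in let '(c, d) := f in
  (0 <? orientZ a b c * orientZ a b d)%Z || (0 <? orientZ c d a * orientZ c d b)%Z ||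
  zpoint_eqb b c && negb (orientZ a b d =? 0)%Z ||
  zpoint_eqb a d && negb (orientZ a b c =? 0)%Z.

Lemma proper_crossingb_sound a b c d :
  proper_crossingb (a, b) (c, d) = true ->
  exists p, on_segment (of_zpoint a) (of_zpoint b) p /\
    on_segment (of_zpoint c) (of_zpoint d) p /\ p <> of_zpoint a /\ p <> of_zpoint b.
Proof.
  simpl. intros [Hab Hcd]%andb_prop. apply Z.ltb_lt, IZR_lt in Hab, Hcd.
  rewrite <- orient_prod_of_zpoint in Hab, Hcd. exact (proper_crossing _ _ _ _ Hab Hcd).
Qed.

Lemma noncrossing_pairb_sound a b c d p :
  noncrossing_pairb (a, b) (c, d) = true ->
  on_segment (of_zpoint a) (of_zpoint b) p -> on_segment (of_zpoint c) (of_zpoint d) p ->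
  (p = of_zpoint a \/ p = of_zpoint b) /\ (p = of_zpoint c \/ p = of_zpoint d).
Proof.
  simpl. intros H Hab Hcd.
  apply Bool.orb_true_iff in H as [[[H|H]%Bool.orb_true_iff|H]%Bool.orb_true_iff|H].
  - apply Z.ltb_lt, IZR_lt in H. rewrite <- orient_prod_of_zpoint in H.
    exfalso. exact (on_segment_same_side _ _ _ _ _ H Hab Hcd).
  - apply Z.ltb_lt, IZR_lt in H. rewrite <- orient_prod_of_zpoint in H.
    exfalso. exact (on_segment_same_side _ _ _ _ _ H Hcd Hab).
  - apply andb_prop in H as [<-%zpoint_eqb_eq Hd%Bool.negb_true_iff].
    apply Z.eqb_neq in Hd.
    assert (Hp : p = of_zpoint b).
    { apply (on_segment_adjacent (of_zpoint a) _ (of_zpoint d)); auto.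
      rewrite orient_of_zpoint. apply not_0_IZR. exact Hd. }
    auto.
  - apply andb_prop in H as [<-%zpoint_eqb_eq Hc%Bool.negb_true_iff].
    apply Z.eqb_neq in Hc.
    assert (Hp : p = of_zpoint a).
    { apply (on_segment_adjacent (of_zpoint b) _ (of_zpoint c)).
      - rewrite orient_swap, orient_of_zpoint. apply Ropp_neq_0_compat, not_0_IZR. exact Hc.
      - apply on_segment_sym. exact Hab.
      - apply on_segment_sym. exact Hcd. }
    auto.
Qed.

Definition has_proper_crossingb (tz : list zpoint) : bool :=
  existsb (fun i => existsb (fun j => proper_crossingb (tour_edgeZ tz i) (tour_edgeZ tz j))
    (seq (S i) (length tz - S i))) (seq 0 (length tz)).

Definition noncrossingb (tz : list zpoint) : bool :=
  forallb (fun i => forallb (fun j => Nat.eqb i j || noncrossing_pairb (tour_edgeZ tz i) (tour_edgeZ tz j))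
    (seq 0 (length tz))) (seq 0 (length tz)).

Lemma has_proper_crossingb_sound tz :
  has_proper_crossingb tz = true -> ~ noncrossing (map of_zpoint tz).
Proof.
  unfold has_proper_crossingb. intros H Hnc.
  apply existsb_exists in H as [i [Hi H]]. apply existsb_exists in H as [j [Hj H]].
  apply in_seq in Hi, Hj.
  destruct (tour_edgeZ tz i) as [a b] eqn:Ei, (tour_edgeZ tz j) as [c d] eqn:Ej.
  apply proper_crossingb_sound in H as (p & Hab & Hcd & Ha & Hb).
  specialize (Hnc i j ltac:(rewrite length_map; lia) ltac:(rewrite length_map; lia)
    ltac:(lia) p).
  rewrite !tour_edge_of_zpoint, Ei, Ej in Hnc. simpl in Hnc.
  destruct (Hnc Hab Hcd) as [[|] _]; contradiction.
Qed.

Lemma noncrossingb_sound tz : noncrossingb tz = true -> noncrossing (map of_zpoint tz).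
Proof.
  unfold noncrossingb. intros H i j Hi Hj Hij p. rewrite length_map in Hi, Hj.
  rewrite forallb_forall in H. specialize (H i ltac:(apply in_seq; lia)).
  rewrite forallb_forall in H. specialize (H j ltac:(apply in_seq; lia)).
  apply Nat.eqb_neq in Hij. rewrite Hij in H.
  rewrite !tour_edge_of_zpoint.
  destruct (tour_edgeZ tz i) as [a b], (tour_edgeZ tz j) as [c d].
  exact (noncrossing_pairb_sound a b c d p H).
Qed.

Definition sq_distZ (e : zpoint * zpoint) : Z :=
  let '(a, b) := e in
  ((fst a - fst b) * (fst a - fst b) + (snd a - snd b) * (snd a - snd b))%Z.

Lemma sq_distZ_nonneg e : (0 <= sq_distZ e)%Z.
Proof.
  destruct e as [[a1 a2] [b1 b2]]; simpl.
  pose proof (Z.square_nonneg (a1 - b1)); pose proof (Z.square_nonneg (a2 - b2)); lia.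
Qed.

Lemma dist_of_zpoint a b : Defs.dist (of_zpoint a) (of_zpoint b) = sqrt (IZR (sq_distZ (a, b))).
Proof.
  unfold Defs.dist, of_zpoint; simpl. f_equal.
  rewrite plus_IZR, !mult_IZR, !minus_IZR. ring.
Qed.

Lemma Z_sqrt_le_sqrt n : (0 <= n)%Z -> IZR (Z.sqrt n) <= sqrt (IZR n).
Proof.
  intros Hn. destruct (Z.sqrt_spec n Hn) as [Hle _].
  rewrite <- (sqrt_square (IZR (Z.sqrt n))) by (apply IZR_le, Z.sqrt_nonneg).
  apply sqrt_le_1_alt. rewrite <- mult_IZR. apply IZR_le. exact Hle.
Qed.

Lemma sqrt_le_Z_sqrt_succ n : (0 <= n)%Z -> sqrt (IZR n) <= IZR (Z.sqrt n + 1).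
Proof.
  intros Hn. destruct (Z.sqrt_spec n Hn) as [_ Hlt].
  rewrite <- (sqrt_square (IZR (Z.sqrt n + 1))) by (apply IZR_le; pose proof (Z.sqrt_nonneg n); lia).
  apply sqrt_le_1_alt. rewrite <- mult_IZR. apply IZR_le. rewrite Z.add_1_r. lia.
Qed.

Definition edge_sumZ (f : zpoint * zpoint -> Z) (tz : list zpoint) : Z :=
  fold_right Z.add 0%Z (map (fun i => f (tour_edgeZ tz i)) (seq 0 (length tz))).

Definition tour_length_lowerZ : list zpoint -> Z :=
  edge_sumZ (fun e => Z.sqrt (sq_distZ e)).

Definition tour_length_upperZ : list zpoint -> Z :=
  edge_sumZ (fun e => Z.sqrt (sq_distZ e) + 1)%Z.

Lemma IZR_fold_right_add (f : nat -> Z) l :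
  IZR (fold_right Z.add 0%Z (map f l)) = fold_right Rplus 0 (map (fun i => IZR (f i)) l).
Proof. induction l as [|i l IH]; simpl; [reflexivity|]. rewrite plus_IZR, IH. reflexivity. Qed.

Lemma fold_right_Rplus_le (f g : nat -> R) l :
  (forall i, f i <= g i) -> fold_right Rplus 0 (map f l) <= fold_right Rplus 0 (map g l).
Proof. intros Hfg. induction l as [|i l IH]; simpl; [lra|]. specialize (Hfg i). lra. Qed.

Lemma tour_length_of_zpoint tz :
  tour_length (map of_zpoint tz) =
  fold_right Rplus 0 (map (fun i => sqrt (IZR (sq_distZ (tour_edgeZ tz i)))) (seq 0 (length tz))).
Proof.
  unfold tour_length. rewrite length_map. f_equal. apply map_ext. intros i.
  rewrite tour_edge_of_zpoint. destruct (tour_edgeZ tz i). apply dist_of_zpoint.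
Qed.

Lemma tour_length_lowerZ_le tz : IZR (tour_length_lowerZ tz) <= tour_length (map of_zpoint tz).
Proof.
  unfold tour_length_lowerZ, edge_sumZ. rewrite IZR_fold_right_add, tour_length_of_zpoint.
  apply fold_right_Rplus_le. intros i. apply Z_sqrt_le_sqrt, sq_distZ_nonneg.
Qed.

Lemma tour_length_le_upperZ tz : tour_length (map of_zpoint tz) <= IZR (tour_length_upperZ tz).
Proof.
  unfold tour_length_upperZ, edge_sumZ. rewrite IZR_fold_right_add, tour_length_of_zpoint.
  apply fold_right_Rplus_le. intros i. apply sqrt_le_Z_sqrt_succ, sq_distZ_nonneg.
Qed.

Lemma succ_mod_cases i n : (i < n)%nat ->
  ((i + 1) mod n = i + 1 /\ i + 1 < n)%nat \/ (i + 1 = n /\ (i + 1) mod n = 0)%nat.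
Proof.
  intros Hi. destruct (Nat.eq_dec (i + 1) n) as [E|E].
  - right. split; [exact E|]. rewrite E. apply Nat.Div0.mod_same.
  - left. split; [apply Nat.mod_small|]; lia.
Qed.

Lemma nth_rotate {A} (a : A) l i d : (i < S (length l))%nat ->
  nth i (l ++ [a]) d = nth ((i + 1) mod S (length l)) (a :: l) d.
Proof.
  intros Hi. destruct (succ_mod_cases i (S (length l)) Hi) as [[-> Hlt]|[E ->]].
  - rewrite app_nth1 by lia. rewrite Nat.add_1_r. reflexivity.
  - rewrite app_nth2 by lia. replace (i - length l)%nat with 0%nat by lia. reflexivity.
Qed.

Lemma length_app_singleton {A} (l : list A) a : length (l ++ [a]) = S (length l).
Proof. rewrite length_app, Nat.add_comm. reflexivity. Qed.

Lemma tour_edge_rotate (a : point) l i : (i < S (length l))%nat ->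
  tour_edge (l ++ [a]) i = tour_edge (a :: l) ((i + 1) mod S (length l)).
Proof.
  intros Hi. unfold tour_edge. rewrite length_app_singleton. simpl length.
  rewrite !nth_rotate; auto using Nat.mod_upper_bound.
Qed.

Lemma noncrossing_rotate (a : point) l : noncrossing (a :: l) -> noncrossing (l ++ [a]).
Proof.
  intros Hnc i j Hi Hj Hij. rewrite length_app_singleton in Hi, Hj.
  rewrite !tour_edge_rotate by assumption.
  apply Hnc; try (apply Nat.mod_upper_bound; discriminate).
  intros E. apply Hij.
  destruct (succ_mod_cases i _ Hi), (succ_mod_cases j _ Hj). all: lia.
Qed.

Lemma fold_right_Rplus_app (l1 l2 : list R) :
  fold_right Rplus 0 (l1 ++ l2) = fold_right Rplus 0 l1 + fold_right Rplus 0 l2.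
Proof. induction l1 as [|x l1 IH]; simpl; [ring | rewrite IH; ring]. Qed.

Lemma sum_succ_mod (h : nat -> R) n :
  fold_right Rplus 0 (map (fun i => h ((i + 1) mod S n)) (seq 0 (S n))) =
  fold_right Rplus 0 (map h (seq 0 (S n))).
Proof.
  transitivity (fold_right Rplus 0 (map (fun i => h (S i)) (seq 0 n)) + h 0%nat).
  - rewrite seq_S, map_app, fold_right_Rplus_app. cbn [map fold_right Nat.add].
    rewrite Nat.add_1_r, Nat.Div0.mod_same, Rplus_0_r. do 2 f_equal.
    apply map_ext_in. intros i Hi%in_seq. rewrite Nat.mod_small by lia. f_equal. lia.
  - simpl. rewrite <- seq_shift, map_map. ring.
Qed.

Lemma tour_length_rotate (a : point) l : tour_length (l ++ [a]) = tour_length (a :: l).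
Proof.
  unfold tour_length. rewrite length_app_singleton. simpl length.
  symmetry. rewrite <- sum_succ_mod. f_equal. apply map_ext_in. intros i Hi%in_seq.
  rewrite tour_edge_rotate by lia. reflexivity.
Qed.

Lemma noncrossing_app_comm (l1 l2 : list point) :
  noncrossing (l1 ++ l2) -> noncrossing (l2 ++ l1).
Proof.
  revert l2. induction l1 as [|a l1 IH]; intros l2 Hnc.
  - rewrite app_nil_r. exact Hnc.
  - apply noncrossing_rotate in Hnc. rewrite <- app_assoc in Hnc.
    apply IH in Hnc. rewrite <- app_assoc in Hnc. exact Hnc.
Qed.

Lemma tour_length_app_comm (l1 l2 : list point) :
  tour_length (l2 ++ l1) = tour_length (l1 ++ l2).
Proof.
  revert l2. induction l1 as [|a l1 IH]; intros l2.
  - rewrite app_nil_r. reflexivity.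
  - simpl. rewrite <- tour_length_rotate, <- app_assoc, <- IH, <- app_assoc. reflexivity.
Qed.

Fixpoint insertions {A} (a : A) (l : list A) : list (list A) :=
  match l with
  | [] => [[a]]
  | b :: l' => (a :: b :: l') :: map (cons b) (insertions a l')
  end.

Fixpoint permutations {A} (l : list A) : list (list A) :=
  match l with
  | [] => [[]]
  | a :: l' => flat_map (insertions a) (permutations l')
  end.

Lemma in_insertions {A} (a : A) l1 l2 : In (l1 ++ a :: l2) (insertions a (l1 ++ l2)).
Proof.
  induction l1 as [|b l1 IH]; simpl.
  - destruct l2; simpl; auto.
  - right. apply in_map. exact IH.
Qed.

Lemma permutations_complete {A} (m l : list A) : Permutation m l -> In l (permutations m).
Proof.
  revert l. induction m as [|a m IH]; intros l Hml.
  - apply Permutation_nil in Hml. subst. left. reflexivity.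
  - assert (Ha : In a l) by (apply (Permutation_in a Hml); left; reflexivity).
    apply in_split in Ha as (l1 & l2 & ->).
    apply in_flat_map. exists (l1 ++ l2). split; [|apply in_insertions].
    apply IH. exact (Permutation_cons_app_inv _ _ Hml).
Qed.

Lemma remove_NoDup_head {A} (eq_dec : forall x y : A, {x = y} + {x <> y}) x l :
  NoDup (x :: l) -> remove eq_dec x (x :: l) = l.
Proof.
  intros Hnd. inversion_clear Hnd as [|? ? Hx _].
  rewrite remove_cons. apply notin_remove. exact Hx.
Qed.

Lemma noncrossing_rotate_to (x : point) S t :
  Permutation t (x :: S) -> noncrossing t ->
  exists r, Permutation r S /\ noncrossing (x :: r) /\ tour_length (x :: r) = tour_length t.
Proof.
  intros Hperm Hnc.
  assert (Hx : In x t) by (apply (Permutation_in x (Permutation_sym Hperm)); left; reflexivity).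
  apply in_split in Hx as (l1 & l2 & ->).
  exists (l2 ++ l1). split; [|split].
  - apply (Permutation_cons_inv (a := x)). rewrite <- Hperm, app_comm_cons.
    apply Permutation_app_comm.
  - exact (noncrossing_app_comm l1 (x :: l2) Hnc).
  - exact (tour_length_app_comm l1 (x :: l2)).
Qed.

Definition extra_point : zpoint := (36, 32)%Z.

Definition base_points : list zpoint :=
  [(46, 46); (-5, 29); (36, 16); (35, 33); (51, 55); (37, -11); (4, 0); (54, 54)]%Z.

Definition base_tour : list zpoint :=
  [(46, 46); (-5, 29); (51, 55); (36, 16); (54, 54); (37, -11); (35, 33); (4, 0)]%Z.

Lemma NoDup_all_points : NoDup (extra_point :: base_points).
Proof. repeat constructor; cbn; intuition discriminate. Qed.

Lemma NoDup_base_tour : NoDup base_tour.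
Proof. repeat constructor; cbn; intuition discriminate. Qed.

Lemma base_tour_perm : Permutation base_tour base_points.
Proof.
  apply NoDup_Permutation; [exact NoDup_base_tour | apply (NoDup_cons_iff extra_point), NoDup_all_points |].
  intros p. cbn. tauto.
Qed.

Lemma base_tour_noncrossing : noncrossing (map of_zpoint base_tour).
Proof. apply noncrossingb_sound. vm_compute. reflexivity. Qed.

Lemma tours_from_extra_point_checked :
  forallb (fun r => has_proper_crossingb (extra_point :: r) ||
             (tour_length_upperZ (extra_point :: r) <? tour_length_lowerZ base_tour)%Z)
    (permutations base_points) = true.
Proof. vm_compute. reflexivity. Qed.

Lemma noncrossing_tour_shorter T :
  is_tour (of_zpoint extra_point :: map of_zpoint base_points) T -> noncrossing T ->
  tour_length T < tour_length (map of_zpoint base_tour).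
Proof.
  intros (_ & Hperm & _) Hnc.
  destruct (noncrossing_rotate_to (of_zpoint extra_point) (map of_zpoint base_points) T Hperm Hnc)
    as (r & Hr & Hnc' & <-).
  apply Permutation_map_inv in Hr as (rz & -> & Hrz).
  change (of_zpoint extra_point :: map of_zpoint rz) with (map of_zpoint (extra_point :: rz)) in *.
  pose proof tours_from_extra_point_checked as Hcheck.
  rewrite forallb_forall in Hcheck.
  specialize (Hcheck rz (permutations_complete _ _ Hrz)).
  apply Bool.orb_true_iff in Hcheck as [Hcross | Hshort%Z.ltb_lt%IZR_lt].
  - exfalso. exact (has_proper_crossingb_sound _ Hcross Hnc').
  - pose proof (tour_length_le_upperZ (extra_point :: rz)).
    pose proof (tour_length_lowerZ_le base_tour). lra.
Qed.

Theorem theorem2 :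
  exists X : list point, NoDup X /\
  exists x : point, In x X /\
  exists T : list point,
    is_tour (remove point_eq_dec x X) T /\ noncrossing T /\
    forall T' : list point, is_tour X T' -> noncrossing T' ->
      tour_length T' < tour_length T.
Proof.
  assert (Hnd : NoDup (of_zpoint extra_point :: map of_zpoint base_points))
    by exact (FinFun.Injective_map_NoDup of_zpoint_inj NoDup_all_points).
  exists (of_zpoint extra_point :: map of_zpoint base_points). split; [exact Hnd|].
  exists (of_zpoint extra_point). split; [left; reflexivity|].
  exists (map of_zpoint base_tour).
  rewrite (remove_NoDup_head point_eq_dec (of_zpoint extra_point) (map of_zpoint base_points) Hnd).
  split; [|split].
  - split; [|split].
    + exact (FinFun.Injective_map_NoDup of_zpoint_inj NoDup_base_tour).
    + exact (Permutation_map of_zpoint base_tour_perm).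
    + cbn. lia.
  - exact base_tour_noncrossing.
  - exact noncrossing_tour_shorter.
Qed.
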